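(* Let $\beta\ge 1$ and let $\overline R$ and $R$ be two consecutive $\beta$-bounded $T$-coverings (i.e. the initial state of $R$ equals the final state of $\overline R$) in a congestion game in which every delay function is $f(x)=x$, and assume $\mathrm{OPT}>0$. Then $$\frac{\rho(R)}{\mathrm{OPT}}\le 2\sqrt{2\,\frac{\rho(\overline R)}{\mathrm{OPT}}}+4\beta+1.$$
   Context: A congestion game has players $N=\{1,\dots,n\}$, a finite resource set $E$ and strategy sets $\Sigma_i\subseteq 2^E$. For a profile $S=(s_1,\dots,s_n)$, $n_e(S)=|\{i: e\in s_i\}|$. Here all delays are $f(x)=x$, so the cost of player $i$ is $c_i(S)=\sum_{e\in s_i}n_e(S)$ and the social cost is $C(S)=\sum_i c_i(S)=\sum_{e\in E}n_e(S)^2$. Fix an optimal profile $S^*=(s_1^*,\dots,s_n^* )$ minimizing $C$ and write $\mathrm{OPT}=C(S^* )$. A best response of player $i$ in $S$ is a strategy $s_i^b\in\Sigma_i$ minimizing $c_i(S_{-i},\cdot)$ over $\Sigma_i$ (where $(S_{-i},s_i')$ replaces $s_i$ by $s_i'$); if no strategy strictly decreases $i$'s cost, the best response is $s_i$ itself. A $T$-covering is a sequence of profiles $R=(S^0,\dots,S^T)$ together with players $\pi(1),\dots,\pi(T)$ such that for each $1\le t\le T$, $S^t=(S^{t-1}_{-\pi(t)},s')$ where $s'$ is a best response of $\pi(t)$ in $S^{t-1}$, and every player of $N$ occurs at least once among $\pi(1),\dots,\pi(T)$. It is $\beta$-bounded if every player occurs at most $\beta$ times among $\pi(1),\dots,\pi(T)$.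 For each player $i$, $\mathrm{last}_R(i)=\max\{t:\pi(t)=i\}$. Define $\rho(R)=\sum_{i=1}^n\sum_{e\in s_i^*}\bigl(n_e(S^{\mathrm{last}_R(i)-1})+1\bigr)$, where $S^t$ are the states of $R$. *)

From Stdlib Require Import Reals.
From mathcomp Require Import all_boot.
Delimit Scope R_scope with Re.
Set Implicit Arguments. Unset Strict Implicit. Unset Printing Implicit Defensive.

Section CongestionGame.
Variables (E : finType) (n : nat).

Definition profile := {ffun 'I_n -> {set E}}.

Definition upd (S : profile) (i : 'I_n) (s : {set E}) : profile :=
  [ffun j => if j == i then s else S j].

Definition load (S : profile) (e : E) : nat := #|[set i | e \in S i]|.

Definition cost (S : profile) (i : 'I_n) : nat := \sum_(e in S i) load S e.

Definition social_cost (S : profile) : nat := \sum_(i < n) cost S i.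

Variable Sigma : 'I_n -> {set {set E}}.

Definition feasible (S : profile) : Prop := forall i, S i \in Sigma i.

Definition is_optimal (Sstar : profile) : Prop :=
  feasible Sstar /\ forall S, feasible S -> social_cost Sstar <= social_cost S.

Definition best_response (S : profile) (i : 'I_n) (s' : {set E}) : Prop :=
  [/\ s' \in Sigma i,
      (forall s'', s'' \in Sigma i -> cost (upd S i s') i <= cost (upd S i s'') i)
    & ((forall s'', s'' \in Sigma i -> cost S i <= cost (upd S i s'') i) ->
       s' = S i)].

(* A T-covering: states St 0 .. St T, players pi 1 .. pi T
   (values of St, pi outside these ranges are irrelevant). The initial state
   is a feasible profile. *)
Definition T_covering (T : nat) (St : nat -> profile) (pi : nat -> 'I_n) : Prop :=
  [/\ feasible (St 0),
      (forall t, 1 <= t <= T ->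
         exists s', best_response (St t.-1) (pi t) s' /\
                    St t = upd (St t.-1) (pi t) s')
    & (forall i : 'I_n, exists t, 1 <= t <= T /\ pi t = i)].

Definition beta_bounded (beta T : nat) (pi : nat -> 'I_n) : Prop :=
  forall i : 'I_n, count (fun t => pi t == i) (iota 1 T) <= beta.

Definition last_move (T : nat) (pi : nat -> 'I_n) (i : 'I_n) : nat :=
  \max_(t < T.+1 | (1 <= t) && (pi t == i)) t.

Definition rho (Sstar : profile) (T : nat) (St : nat -> profile)
    (pi : nat -> 'I_n) : nat :=
  \sum_(i < n) \sum_(e in Sstar i) (load (St (last_move T pi i).-1) e + 1).

End CongestionGame.

From Stdlib Require Import Reals Lia Psatz.
From mathcomp Require Import all_boot zify.
Set Implicit Arguments. Unset Strict Implicit. Unset Printing Implicit Defensive.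

(* Let M_e be the peak load of resource e along R and Z = sum_e n*_e M_e, where
   n*_e is the load of e in S^*.  Each last best response in R costs at most the
   player's cost on s*_i, so rho(R) <= Z + OPT, and likewise all moves of R cost
   at most beta (Z + OPT) in total.  A move raises the load of e by at most one,
   so n_e^2 grows by at most twice the mover's share and
   sum_e M_e^2 <= C(S^0) + 2 beta (Z + OPT).  Ordering the final users of e in
   Rbar by their last moves shows C(S^0) <= 2 rho(Rbar).  Cauchy-Schwarz,
   Z^2 <= OPT * sum_e M_e^2, then gives a quadratic inequality in Z / OPT whose
   solution is the claimed bound. *)

Lemma sqr_le_succ (a b : nat) : a <= b + 1 -> a ^ 2 <= b ^ 2 + 2 * a.
Proof.
case: a => [//|a]; rewrite addn1 ltnS => le_ab.
by have := leq_mul le_ab le_ab; rewrite !expnS expn0; lia.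
Qed.

Lemma cauchy_schwarz_nat (I : finType) (a b : I -> nat) :
  0 < \sum_i a i ^ 2 ->
  (\sum_i a i * b i) ^ 2 <= (\sum_i a i ^ 2) * (\sum_i b i ^ 2).
Proof.
set A := \sum_i a i ^ 2; set B := \sum_i b i ^ 2; set X := \sum_i a i * b i.
move=> A_gt0.
(* Sum 2 (X a_i)(A b_i) <= (X a_i)^2 + (A b_i)^2 over i and cancel A. *)
have termwise i : 2 * (X * A) * (a i * b i) <= X ^ 2 * a i ^ 2 + A ^ 2 * b i ^ 2.
  by have := (nat_Cauchy (X * a i) (A * b i)).1; rewrite !expnMn; lia.
have := @leq_sum _ (index_enum I) xpredT _ _ (fun i _ => termwise i).
rewrite big_split /= -!big_distrr /= -/A -/B -/X.
have -> : 2 * (X * A) * X = X ^ 2 * A + A * X ^ 2 by lia.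
by rewrite leq_add2l expnS expn1 -mulnA leq_pmul2l.
Qed.

(* Pairs (j, i) of A with t j <= t i: every pair of A is counted at least once
   in one of its two orders. *)
Lemma card_sqr_le_rank_sum (I : finType) (A : {set I}) (t : I -> nat) :
  #|A| ^ 2 <= 2 * \sum_(i in A) #|[set j in A | t j <= t i]|.
Proof.
have rankE i : #|[set j in A | t j <= t i]| = \sum_(j in A) (t j <= t i : nat).
  rewrite -sum1dep_card big_mkcond /= [RHS]big_mkcond /=.
  by apply: eq_bigr => j _; case: (j \in A); case: (t j <= t i).
under eq_bigr do rewrite rankE.
rewrite mul2n -addnn {2}(exchange_big _ _ _ (mem A) (mem A)) /= -big_split /=.
rewrite expnS expn1 -{1}sum1_card big_distrl /=; apply: leq_sum => i iA.
rewrite mul1n -big_split /= -sum1_card; apply: leq_sum => j jA.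
by case: (leqP (t j) (t i)) => [//|/ltnW ->].
Qed.

Section Profiles.
Variables (E : finType) (n : nat).
Implicit Types (S : profile E n) (i j : 'I_n) (s : {set E}) (e : E).

Lemma sum_strategies_exchange S (g : 'I_n -> E -> nat) :
  \sum_(i < n) \sum_(e in S i) g i e = \sum_e \sum_(i | e \in S i) g i e.
Proof.
rewrite (eq_bigr (fun i => \sum_e (if e \in S i then g i e else 0))); last first.
  by move=> i _; rewrite big_mkcond.
by rewrite exchange_big /=; apply: eq_bigr => e _; rewrite [RHS]big_mkcond.
Qed.

Lemma sum_strategies_load S (f : E -> nat) :
  \sum_(i < n) \sum_(e in S i) f e = \sum_e load S e * f e.
Proof.
rewrite sum_strategies_exchange; apply: eq_bigr => e _.
by rewrite sum_nat_const /load; congr (_ * _); apply: eq_card => i; rewrite inE.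
Qed.

Lemma social_cost_loads S : social_cost S = \sum_e load S e ^ 2.
Proof. exact: sum_strategies_load. Qed.

Lemma upd_self S i s : upd S i s i = s.
Proof. by rewrite ffunE eqxx. Qed.

Lemma upd_other S i j s : j != i -> upd S i s j = S j.
Proof. by rewrite ffunE => /negbTE ->. Qed.

Lemma load_upd_le S i s e : load (upd S i s) e <= load S e + 1.
Proof.
rewrite /load; apply: (@leq_trans #|i |: [set j | e \in S j]|).
  apply: subset_leq_card; apply/subsetP => j; rewrite !inE ffunE.
  by case: eqP => [->|_ ->]; rewrite ?eqxx ?orbT.
by rewrite cardsU1 addnC leq_add2l leq_b1.
Qed.

Lemma load_upd_notin S i s e : e \notin s -> load (upd S i s) e <= load S e.
Proof.
move=> e_s; apply: subset_leq_card; apply/subsetP => j; rewrite !inE ffunE.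
by case: eqP => [_ e_in|_ ->]; first by rewrite e_in in e_s.
Qed.

Lemma best_response_cost_le (Sigma : 'I_n -> {set {set E}}) S i s' s :
  best_response Sigma S i s' -> s \in Sigma i ->
  cost (upd S i s') i <= \sum_(e in s) (load S e + 1).
Proof.
case=> _ best _ s_Sigma; apply: leq_trans (best _ s_Sigma) _.
by rewrite /cost upd_self; apply: leq_sum => e _; exact: load_upd_le.
Qed.

End Profiles.

Section BestResponseRun.
Variables (E : finType) (n : nat) (Sigma : 'I_n -> {set {set E}}).
Variables (T : nat) (St : nat -> profile E n) (pi : nat -> 'I_n).
Hypothesis run_step : forall t, 1 <= t <= T ->
  exists s', best_response Sigma (St t.-1) (pi t) s' /\ St t = upd (St t.-1) (pi t) s'.
Hypothesis run_covers : forall i : 'I_n, exists t, 1 <= t <= T /\ pi t = i.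

Lemma move_cost_le t s : 1 <= t <= T -> s \in Sigma (pi t) ->
  cost (St t) (pi t) <= \sum_(e in s) (load (St t.-1) e + 1).
Proof. by move=> /run_step [s' [br ->]]; exact: best_response_cost_le br. Qed.

Lemma last_move_le i : last_move T pi i <= T.
Proof. by apply/bigmax_leqP => t _; rewrite -ltnS. Qed.

Lemma last_moveP i :
  [/\ 1 <= last_move T pi i <= T, pi (last_move T pi i) = i &
      forall u, 1 <= u <= T -> pi u = i -> u <= last_move T pi i].
Proof.
have [t0 [/andP [t0_gt0 t0_le] pi_t0]] := run_covers i.
have ub u : 1 <= u <= T -> pi u = i -> u <= last_move T pi i.
  move=> /andP [u_gt0 u_le] pi_u.
  have := @leq_bigmax_cond _ (fun t : 'I_T.+1 => (1 <= t) && (pi t == i))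
              (fun t : 'I_T.+1 => nat_of_ord t) (Ordinal (u_le : u < T.+1)).
  by rewrite /= u_gt0 pi_u eqxx => /(_ isT).
have last_gt0 : 0 < last_move T pi i.
  by apply: leq_trans (ub t0 _ pi_t0); rewrite ?t0_gt0.
have : (last_move T pi i == 0) || ((1 <= last_move T pi i) && (pi (last_move T pi i) == i)).
  apply: (big_ind (fun x => (x == 0) || ((1 <= x) && (pi x == i)))) => //.
    by move=> x y hx hy; rewrite /maxn; case: ltnP.
  by move=> t ->; rewrite orbT.
by rewrite (negbTE (lt0n_neq0 last_gt0)) /= => /andP [_ /eqP]; rewrite last_gt0 last_move_le.
Qed.

Lemma last_move_stable i u : last_move T pi i <= u <= T ->
  St u i = St (last_move T pi i) i.
Proof.
have [_ _ ub] := last_moveP i; set l := last_move T pi i in ub *.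
move=> /andP [l_u]; rewrite -(subnK l_u).
elim: (u - l) => [//|k IH] le_T.
have step : 1 <= (k.+1 + l) <= T by rewrite le_T andbT addSn.
have [s' [_ ->]] := run_step step.
have other : i != pi (k.+1 + l).
  by apply/eqP => ei; have := ub _ step (esym ei); rewrite addSn ltnNge leq_addl.
by rewrite upd_other // addSn /= IH // (leq_trans _ le_T) // addSn.
Qed.

Definition peak_load e := \max_(t < T.+1) load (St t) e.

Lemma load_le_peak t e : t <= T -> load (St t) e <= peak_load e.
Proof.
move=> le_tT.
exact: (@leq_bigmax _ (fun t : 'I_T.+1 => load (St t) e) (Ordinal (le_tT : t < T.+1))).
Qed.

Definition mover_load u e := if e \in St u (pi u) then load (St u) e else 0.

Lemma sum_mover_load u : \sum_e mover_load u e = cost (St u) (pi u).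
Proof. by rewrite /cost [RHS]big_mkcond. Qed.

Lemma sqr_load_le e t : t <= T ->
  load (St t) e ^ 2 <= load (St 0) e ^ 2 + 2 * \sum_(1 <= u < t.+1) mover_load u e.
Proof.
elim: t => [_|t IH lt_tT]; first by rewrite big_geq // addn0.
rewrite big_nat_recr //= mulnDr addnA /mover_load.
have step : 1 <= t.+1 <= T by rewrite lt_tT.
have [s' [_ ->]] := run_step step.
rewrite /= upd_self; case: ifP => e_s'.
  by apply: leq_trans (sqr_le_succ (load_upd_le _ _ _ e)) _; rewrite leq_add2r IH // ltnW.
rewrite muln0 addn0; apply: leq_trans (IH (ltnW lt_tT)).
by rewrite leq_sqr load_upd_notin ?e_s'.
Qed.

Lemma sum_sqr_peak_le : \sum_e peak_load e ^ 2 <=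
  social_cost (St 0) + 2 * \sum_(1 <= u < T.+1) cost (St u) (pi u).
Proof.
have per_resource e : peak_load e ^ 2 <=
    load (St 0) e ^ 2 + 2 * \sum_(1 <= u < T.+1) mover_load u e.
  apply: (big_ind (fun x => x ^ 2 <= _)) => // [x y ? ?|t _].
    by rewrite /maxn; case: ltnP.
  apply: leq_trans (sqr_load_le e (ltn_ord t : t <= T)) _.
  by rewrite leq_add2l leq_mul2l (@big_cat_nat _ _ _ t.+1 1 T.+1) //= leq_addr.
apply: leq_trans (@leq_sum _ (index_enum E) xpredT _ _ (fun e _ => per_resource e)) _.
rewrite big_split /= social_cost_loads -big_distrr /= exchange_big /=.
by rewrite leq_add2l leq_mul2l /=; apply: leq_sum => u _; rewrite -sum_mover_load.
Qed.

Section OptimalStrategies.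
Variable Sstar : profile E n.
Hypothesis Sstar_feasible : forall i, Sstar i \in Sigma i.

(* A final user j of e whose last move is not later than that of i already uses
   e at the last move of i, so each rank in card_sqr_le_rank_sum is at most a
   load seen at a last move. *)
Lemma final_social_cost_le : social_cost (St T) <= 2 * rho Sstar T St pi.
Proof.
rewrite social_cost_loads.
have per_resource e : load (St T) e ^ 2 <=
    2 * \sum_(i | e \in St T i) load (St (last_move T pi i)) e.
  apply: leq_trans (card_sqr_le_rank_sum [set j | e \in St T j] (last_move T pi)) _.
  rewrite leq_mul2l /= big_mkcond [X in _ <= X]big_mkcond /=.
  apply: leq_sum => i _; rewrite inE; case: ifP => // e_i.
  apply: subset_leq_card; apply/subsetP => j; rewrite !inE => /andP [e_j le_ji].
  have [/andP [_ li_T] _ _] := last_moveP i.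
  by rewrite (@last_move_stable j (last_move T pi i)) ?le_ji //
       -(@last_move_stable j T) // last_move_le leqnn.
apply: leq_trans (@leq_sum _ (index_enum E) xpredT _ _ (fun e _ => per_resource e)) _.
rewrite -big_distrr /= leq_mul2l /= -sum_strategies_exchange.
apply: leq_sum => i _.
have [l_range pi_l _] := last_moveP i.
rewrite (@last_move_stable i T) ?last_move_le ?leqnn //.
by have := move_cost_le l_range (Sstar_feasible (pi _)); rewrite pi_l.
Qed.

Definition peak_weight := \sum_e load Sstar e * peak_load e.

Lemma sum_peak_costs_le :
  \sum_(i < n) \sum_(e in Sstar i) (peak_load e + 1) <= peak_weight + social_cost Sstar.
Proof.
rewrite sum_strategies_load social_cost_loads -big_split /=; apply: leq_sum => e _.
rewrite mulnDr muln1 leq_add2l.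
by case: (load Sstar e) => // k; rewrite expnS expn1 leq_pmulr.
Qed.

Lemma rho_le_peak : rho Sstar T St pi <= peak_weight + social_cost Sstar.
Proof.
apply: leq_trans sum_peak_costs_le; apply: leq_sum => i _; apply: leq_sum => e _.
by rewrite leq_add2r load_le_peak // (leq_trans (leq_pred _)) ?last_move_le.
Qed.

Lemma sum_move_costs_le beta : beta_bounded beta T pi ->
  \sum_(1 <= u < T.+1) cost (St u) (pi u) <= beta * (peak_weight + social_cost Sstar).
Proof.
move=> bounded; set h := fun j => \sum_(e in Sstar j) (peak_load e + 1).
apply: (@leq_trans (\sum_(1 <= u < T.+1) h (pi u))).
  rewrite big_nat_cond [X in _ <= X]big_nat_cond; apply: leq_sum => u /andP [u_range _].
  apply: leq_trans (move_cost_le u_range (Sstar_feasible (pi u))) _.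
  apply: leq_sum => e _; rewrite leq_add2r load_le_peak //.
  by case/andP: u_range => _ le_uT; rewrite (leq_trans (leq_pred u)).
rewrite (partition_big pi xpredT) //=.
apply: leq_trans (leq_mul (leqnn beta) sum_peak_costs_le); rewrite big_distrr /=.
apply: leq_sum => j _.
rewrite (eq_bigr (fun=> 1 * h j)) => [|u /eqP ->]; last by rewrite mul1n.
by rewrite -big_distrl sum1_count /index_iota subSS subn0 leq_mul2r bounded orbT.
Qed.

Lemma peak_weight_sqr_le : 0 < social_cost Sstar ->
  peak_weight ^ 2 <= social_cost Sstar * \sum_e peak_load e ^ 2.
Proof. by rewrite social_cost_loads; exact: cauchy_schwarz_nat. Qed.

End OptimalStrategies.
End BestResponseRun.

Section RatioBound.
Local Open Scope R_scope.

Lemma quadratic_bound (z o s b : R) : 0 < o -> 0 <= s -> 0 <= b ->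
  z * z <= (s * o) * (s * o) + 2 * b * o * z + 2 * b * o * o ->
  z <= (s + 2 * b + 1) * o.
Proof.
move=> o_gt0 s_ge0 b_ge0 quad; apply: Rnot_lt_le => z_big.
have : (s + 2 * b + 1) * o * ((s + 1) * o) < z * (z - 2 * b * o).
  by apply: Rmult_le_0_lt_compat; nra.
have : 0 <= (2 * s + 2 * b * s + 1) * (o * o) by apply: Rmult_le_pos; nra.
nra.
Qed.

(* z plays the peak weight Z, o plays OPT and c plays C(S^0). *)
Lemma ratio_bound (r rb c z o b : R) : 0 < o -> 1 <= b -> 0 <= rb ->
  c <= 2 * rb -> r <= z + o -> z * z <= o * (c + 2 * (b * (z + o))) ->
  r / o <= 2 * sqrt (2 * (rb / o)) + 4 * b + 1.
Proof.
move=> o_gt0 b_ge1 rb_ge0 c_le r_le z_le.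
set s := sqrt (2 * (rb / o)).
have s_ge0 : 0 <= s by apply: sqrt_pos.
have s_sqr : s * s * o = 2 * rb.
  rewrite /s sqrt_sqrt; first by field; lra.
  by apply: Rmult_le_pos; [lra | apply: Rle_mult_inv_pos].
have oc_le : o * c <= (s * o) * (s * o) by nra.
have z_le' : z <= (s + 2 * b + 1) * o by apply: quadratic_bound; nra.
apply: (Rmult_le_reg_r o) => //; rewrite /Rdiv Rmult_assoc Rinv_l; nra.
Qed.

Lemma ratio_bound_nat (r rb c z o b : nat) : (0 < o)%N -> (1 <= b)%N ->
  (c <= 2 * rb)%N -> (r <= z + o)%N -> (z ^ 2 <= o * (c + 2 * (b * (z + o))))%N ->
  INR r / INR o <= 2 * sqrt (2 * (INR rb / INR o)) + 4 * INR b + 1.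
Proof.
move=> /ltP/lt_INR o_gt0 /leP/le_INR b_ge1 /leP/le_INR c_le /leP/le_INR r_le.
rewrite expnS expn1 => /leP/le_INR z_le.
have INR2 : INR 2 = 2 by rewrite /=; lra.
rewrite -!multE -!plusE !(mult_INR, plus_INR) ?INR2 in c_le r_le z_le.
by apply: (ratio_bound (c := INR c) (z := INR z)) => //; exact: pos_INR.
Qed.

End RatioBound.

Theorem lemma4 (E : finType) (n : nat) (Sigma : 'I_n -> {set {set E}})
    (Sstar : profile E n) (beta T : nat)
    (Sbar : nat -> profile E n) (pibar : nat -> 'I_n)
    (S : nat -> profile E n) (pi : nat -> 'I_n) :
  is_optimal Sigma Sstar ->
  (0 < social_cost Sstar)%N ->
  (1 <= beta)%N ->
  T_covering Sigma T Sbar pibar -> beta_bounded beta T pibar ->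
  T_covering Sigma T S pi -> beta_bounded beta T pi ->
  S 0%N = Sbar T ->
  (INR (rho Sstar T S pi) / INR (social_cost Sstar) <=
   2 * sqrt (2 * (INR (rho Sstar T Sbar pibar) / INR (social_cost Sstar)))
   + 4 * INR beta + 1)%Re.
Proof.
move=> [Sstar_feasible _] opt_gt0 beta_ge1 [_ bar_step bar_covers] _
  [_ run_step _] bounded S0_eq.
apply: (@ratio_bound_nat _ _ (social_cost (S 0)) (peak_weight T S Sstar)) => //.
- by rewrite S0_eq; apply: (final_social_cost_le (Sigma := Sigma)).
- exact: rho_le_peak.
- apply: leq_trans (peak_weight_sqr_le T S opt_gt0) (leq_mul (leqnn _) _).
  apply: leq_trans (sum_sqr_peak_le run_step) _; rewrite leq_add2l leq_mul2l /=.
  exact: (sum_move_costs_le (Sigma := Sigma)).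
Qed.
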